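(* Let $M^n$ be a hypersurface in $\mathbb{R}^{n+1}$ and $p\in M$. Suppose that at $p$ we have $H>0$ and $\|\mathring{A}\|^2=\varepsilon H^2$ for some $\varepsilon\in\left(0,\frac{1}{n(n-1)}\right)$. Then at $p$ $$nC-(1+n\varepsilon)H\|A\|^2\geq \varepsilon(1+n\varepsilon)\left(1-\sqrt{n(n-1)\varepsilon}\right)H^3,$$ where $C=\kappa_1^3+\dots+\kappa_n^3$.
   Context: $\kappa_1\le\dots\le\kappa_n$ are the principal curvatures at $p$, $H=\sum_i\kappa_i$ is the mean curvature, $\|A\|^2=\sum_i\kappa_i^2$, and $\|\mathring{A}\|^2=\|A\|^2-\frac1nH^2$ is the squared norm of the trace-free second fundamental form $h_{ij}-\frac1nHg_{ij}$. *)

(* Pointwise data of a hypersurface M^n in R^{n+1} at p: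
   the principal curvatures kappa_1,...,kappa_n, indexed by 'I_n. *)
From mathcomp Require Import all_boot all_order all_algebra.
Set Implicit Arguments. Unset Strict Implicit. Unset Printing Implicit Defensive.
Import Order.TTheory GRing.Theory Num.Theory.
Local Open Scope ring_scope.

Definition meanH (R : rcfType) (n : nat) (k : 'I_n -> R) : R := \sum_(i < n) k i.
Definition normA2 (R : rcfType) (n : nat) (k : 'I_n -> R) : R := \sum_(i < n) k i ^+ 2.
Definition normAo2 (R : rcfType) (n : nat) (k : 'I_n -> R) : R :=
  normA2 k - (meanH k) ^+ 2 / n%:R.
Definition cubC (R : rcfType) (n : nat) (k : 'I_n -> R) : R := \sum_(i < n) k i ^+ 3.

From mathcomp Require Import all_boot all_order all_algebra.
From mathcomp Require Import ring lra.
Set Implicit Arguments. Unset Strict Implicit.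
Import Order.TTheory GRing.Theory Num.Theory.
Local Open Scope ring_scope.

(** Write [s = sqrt (n (n-1) eps)].  Comparing one curvature with the mean of
    the other [n - 1] shows [(n k_i - H)^2 <= n (n-1) |A°|^2 = s^2 H^2], so every
    curvature is at least [r = (1 - s) H / n].  Hence the cubic
    [sum_i (k_i - m)^2 (k_i - r)] is nonnegative for every [m]; expanding it
    with [m = H/n + s H / (n (n-1))] and adding a manifestly nonnegative
    remainder gives the inequality. *)

Section Moments.

Variables (R : rcfType) (n : nat) (k : 'I_n -> R).

Lemma sum_sqr_sub (t : R) :
  \sum_(i < n) (k i - t) ^+ 2 = normA2 k - 2 * t * meanH k + n%:R * t ^+ 2.
Proof.
have expand i : (k i - t) ^+ 2 = k i ^+ 2 - 2 * t * k i + t ^+ 2 by ring.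
under eq_bigr do rewrite expand.
rewrite big_split sumrB /= -mulr_sumr sumr_const card_ord.
rewrite /normA2 /meanH -mulr_natl; ring.
Qed.

Lemma sum_sqr_sub_mul_sub (m r : R) :
  \sum_(i < n) (k i - m) ^+ 2 * (k i - r) =
  cubC k - (2 * m + r) * normA2 k + (m ^+ 2 + 2 * m * r) * meanH k
    - n%:R * (m ^+ 2 * r).
Proof.
have expand i : (k i - m) ^+ 2 * (k i - r) =
    k i ^+ 3 - (2 * m + r) * k i ^+ 2 + (m ^+ 2 + 2 * m * r) * k i - m ^+ 2 * r.
  by ring.
under eq_bigr do rewrite expand.
rewrite sumrB big_split sumrB /= -!mulr_sumr sumr_const card_ord.
rewrite /cubC /normA2 /meanH -mulr_natl; ring.
Qed.

Hypothesis n_gt1 : (1 < n)%N.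

(* Cauchy-Schwarz for the [n - 1] curvatures other than [k i]: shift all
   curvatures by the mean [t] of those [n - 1] and drop the other squares. *)
Lemma sqr_scaled_dev_le (i : 'I_n) :
  (n%:R * k i - meanH k) ^+ 2 <= n%:R * (n%:R - 1) * normAo2 k.
Proof.
have N1 : 1 < n%:R :> R by rewrite ltr1n.
have N0 : n%:R != 0 :> R by apply/eqP; lra.
have N10 : n%:R - 1 != 0 :> R by apply/eqP; lra.
set t := (meanH k - k i) / (n%:R - 1).
set D := \sum_(j < n) (k j - t) ^+ 2 - (k i - t) ^+ 2.
have D_ge0 : 0 <= n%:R * (n%:R - 1) * D.
  rewrite mulr_ge0 ?mulr_ge0 ?subr_ge0 //; try lra.
  by rewrite (bigD1 i) //= lerDl; apply: sumr_ge0 => j _; apply: sqr_ge0.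
have -> : (n%:R * k i - meanH k) ^+ 2 =
    n%:R * (n%:R - 1) * normAo2 k - n%:R * (n%:R - 1) * D.
  by rewrite /D sum_sqr_sub /t /normAo2; field; rewrite N0 N10.
by rewrite lerBlDr lerDl.
Qed.

Lemma curvature_ge (s : R) (i : 'I_n) :
  0 <= s -> 0 <= meanH k ->
  n%:R * (n%:R - 1) * normAo2 k <= (s * meanH k) ^+ 2 ->
  (1 - s) * meanH k / n%:R <= k i.
Proof.
move=> s_ge0 H_ge0 normAo2_le.
have N1 : 1 < n%:R :> R by rewrite ltr1n.
have := le_trans (sqr_scaled_dev_le i) normAo2_le.
rewrite -[X in X <= _]real_normK ?num_real // ler_pXn2r ?nnegrE ?mulr_ge0 //.
by move/lerNnormlW; rewrite ler_pdivrMr; lra.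
Qed.

(* [r] is the lower bound of [curvature_ge], and [m] is the common value of
   the other curvatures when one of them equals [r]. *)
Lemma pinched_cubic_gap (eps s : R) :
  s ^+ 2 = n%:R * (n%:R - 1) * eps -> normAo2 k = eps * meanH k ^+ 2 ->
  let r := (1 - s) * meanH k / n%:R in
  let m := meanH k / n%:R + s * meanH k / (n%:R * (n%:R - 1)) in
  n%:R * cubC k - (1 + n%:R * eps) * meanH k * normA2 k
    - eps * (1 + n%:R * eps) * (1 - s) * meanH k ^+ 3 =
  n%:R * \sum_(i < n) (k i - m) ^+ 2 * (k i - r)
    + eps * meanH k ^+ 3 * s * (1 - s) ^+ 2 / (n%:R - 1).
Proof.
move=> s2 pinched r m.
have N1 : 1 < n%:R :> R by rewrite ltr1n.
have N0 : n%:R != 0 :> R by apply/eqP; lra.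
have N10 : n%:R - 1 != 0 :> R by apply/eqP; lra.
have epsE : eps = s ^+ 2 / (n%:R * (n%:R - 1)) by rewrite s2; field; rewrite N0 N10.
have A2E : normA2 k = meanH k ^+ 2 / n%:R + eps * meanH k ^+ 2.
  by move: pinched; rewrite /normAo2 => <-; ring.
by rewrite sum_sqr_sub_mul_sub A2E /m /r epsE; field; rewrite N0 N10.
Qed.

End Moments.

Theorem lemma3 (R : rcfType) (n : nat) (k : 'I_n -> R) (eps : R) :
  (forall i j : 'I_n, (i <= j)%N -> k i <= k j) ->
  0 < meanH k ->
  0 < eps -> eps < 1 / (n%:R * (n%:R - 1)) ->
  normAo2 k = eps * meanH k ^+ 2 ->
  n%:R * cubC k - (1 + n%:R * eps) * meanH k * normA2 k >=
    eps * (1 + n%:R * eps) * (1 - Num.sqrt (n%:R * (n%:R - 1) * eps)) * meanH k ^+ 3.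
Proof.
move=> _ H_gt0 eps_gt0 eps_lt pinched.
have n_gt1 : (1 < n)%N.
  rewrite ltnNge; apply/negP => n_le1; move: eps_lt.
  have -> : n%:R * (n%:R - 1) = 0 :> R by case: (n) n_le1 => [|[|]] // _; ring.
  by rewrite invr0 mulr0 => /(lt_trans eps_gt0); rewrite ltxx.
have N1 : 1 < n%:R :> R by rewrite ltr1n.
set s := Num.sqrt _.
have s_ge0 : 0 <= s by apply: sqrtr_ge0.
have s2 : s ^+ 2 = n%:R * (n%:R - 1) * eps.
  by rewrite sqr_sqrtr // !mulr_ge0 ?ler0n ?subr_ge0 ?(ltW N1) ?(ltW eps_gt0).
have r_le i : (1 - s) * meanH k / n%:R <= k i.
  apply: curvature_ge => //; first exact: ltW.
  by rewrite pinched exprMn s2 mulrA.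
rewrite -subr_ge0 (pinched_cubic_gap n_gt1 s2 pinched).
apply: addr_ge0.
  by rewrite mulr_ge0 // sumr_ge0 // => i _; rewrite mulr_ge0 ?sqr_ge0 ?subr_ge0.
rewrite divr_ge0 ?subr_ge0 ?(ltW N1) // mulr_ge0 ?sqr_ge0 //.
by rewrite !mulr_ge0 ?exprn_ge0 // ltW.
Qed.
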